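(* Let $E_n$ ($n\geq1$) and $E_0$ be measurable subsets of $\mathbb{R}^d$ such that $|E_n\,\Delta\,E_0|\to 0$ and $d_H(\partial E_n,\partial E_0)\to 0$. Then also $d_H(E_n,E_0)\to0$.
   Context: $\partial E$ denotes the topological boundary of $E$; $|\cdot|$ is Lebesgue measure. $d_H(E,F)=\max\{\sup_{x\in E}\operatorname{dist}(x,F),\sup_{y\in F}\operatorname{dist}(y,E)\}$ is the Hausdorff distance. *)

From HB Require Import structures.
From mathcomp Require Import all_boot all_order all_algebra.
From mathcomp Require Import all_classical all_reals all_analysis.
Set Implicit Arguments. Unset Strict Implicit. Unset Printing Implicit Defensive.
Import Order.TTheory GRing.Theory Num.Theory.
Import numFieldNormedType.Exports.
Local Open Scope classical_set_scope.
Local Open Scope ring_scope.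

(* Points of R^d are row vectors 'rV[R]_d (topology = product topology,
   from matrix_normedtype). *)

Definition eucl {R : realType} {d : nat} (x y : 'rV[R]_d) : R :=
  Num.sqrt (\sum_(i < d) (x ord0 i - y ord0 i) ^+ 2).

Definition box {R : realType} {d : nat} (a b : 'rV[R]_d) : set 'rV[R]_d :=
  [set x | forall i, a ord0 i <= x ord0 i < b ord0 i].
Definition box_vol {R : realType} {d : nat} (a b : 'rV[R]_d) : R :=
  \prod_(i < d) (b ord0 i - a ord0 i).

Definition lebesgue_outer {R : realType} {d : nat} (A : set 'rV[R]_d) : \bar R :=
  ereal_inf [set s : \bar R | exists (a b : nat -> 'rV[R]_d),
    [/\ (forall k i, a k ord0 i <= b k ord0 i),
        A `<=` \bigcup_k box (a k) (b k) &
        s = (\sum_(0 <= k <oo) (box_vol (a k) (b k))%:E)%E]].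

Definition leb_measurable {R : realType} {d : nat} (A : set 'rV[R]_d) : Prop :=
  caratheodory_measurable (@lebesgue_outer R d) A.

Definition symdiff {T : Type} (A B : set T) : set T := (A `\` B) `|` (B `\` A).

Definition tboundary {R : realType} {d : nat} (E : set 'rV[R]_d) : set 'rV[R]_d :=
  closure E `\` interior E.

(* dist(x,F) = inf_{y in F} |x-y|  (= +oo if F is empty) *)
Definition edist {R : realType} {d : nat} (x : 'rV[R]_d) (F : set 'rV[R]_d) : \bar R :=
  ereal_inf [set (eucl x y)%:E | y in F].

(* Hausdorff distance in [0,+oo]; d_H(empty,empty) = 0, d_H(empty,F) = +oo
   for nonempty F *)
Definition hausdorff {R : realType} {d : nat} (E F : set 'rV[R]_d) : \bar R :=
  maxe 0%E (maxe (ereal_sup [set edist x F | x in E])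
                 (ereal_sup [set edist y E | y in F])).

(* Fix e > 0 and r = e / (3 (d + 1)); for large n, |E_n Δ E_0| < (2r)^d and
   every boundary point of E_n lies within r of the boundary of E_0. Take x in
   E_n and the cube Q of half-side r around x. If Q is contained in E_n, it
   cannot lie in E_n \ E_0 by the measure bound, so Q meets E_0. Otherwise the
   segment from x to a point of Q outside E_n crosses the boundary of E_n
   inside Q; that point is within r of the boundary of E_0, hence within 2r
   of E_0. Either way some point of E_0 is within d (3 r) <= e of x, and the
   same holds with E_n and E_0 exchanged. Only the outer measure enters. *)

From Pilot Require Import Defs.
From HB Require Import structures.
From mathcomp Require Import all_boot all_order all_algebra.
From mathcomp Require Import all_classical all_reals all_analysis.
From mathcomp Require Import measurable_realfun ring lra.
Import Order.TTheory GRing.Theory Num.Theory.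
Import numFieldNormedType.Exports.
Local Open Scope classical_set_scope.
Local Open Scope ring_scope.

Section BoxVolume.
Variable R : realType.

Definition fbox {d} (a b : 'I_d -> R) : set ('I_d -> R) :=
  [set x | forall i, a i <= x i < b i].

Definition fbox_vol {d} (a b : 'I_d -> R) : R := \prod_(i < d) (b i - a i).

Definition vcons {d} (t : R) (y : 'I_d -> R) : 'I_d.+1 -> R :=
  fun j => if unlift ord0 j is Some i then y i else t.

Definition vtail {d} (x : 'I_d.+1 -> R) : 'I_d -> R := fun i => x (lift ord0 i).

Lemma vcons0 d t (y : 'I_d -> R) : vcons t y ord0 = t.
Proof. by rewrite /vcons unlift_none. Qed.

Lemma vconsS d t (y : 'I_d -> R) i : vcons t y (lift ord0 i) = y i.
Proof. by rewrite /vcons liftK. Qed.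

Lemma fbox_volS d (a b : 'I_d.+1 -> R) :
  fbox_vol a b = (b ord0 - a ord0) * fbox_vol (vtail a) (vtail b).
Proof. by rewrite /fbox_vol big_ord_recl. Qed.

Lemma fbox_vol_ge0 d (a b : 'I_d -> R) :
  (forall i, a i <= b i) -> 0 <= fbox_vol a b.
Proof. by move=> ab; rewrite prodr_ge0 // => i _; rewrite subr_ge0. Qed.

Lemma fbox_slice_cover {d} {a b : 'I_d.+1 -> R} {A B : nat -> 'I_d.+1 -> R}
    {S : pred nat} {t : R} :
  a ord0 <= t < b ord0 ->
  fbox a b `<=` \bigcup_(k in [set k | S k]) fbox (A k) (B k) ->
  fbox (vtail a) (vtail b) `<=`
    \bigcup_(k in [set k | S k && (A k ord0 <= t < B k ord0)])
      fbox (vtail (A k)) (vtail (B k)).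
Proof.
move=> tab cover y yab.
have tyab : fbox a b (vcons t y).
  by move=> j; case: (unliftP ord0 j) => [i ->|->];
    rewrite ?vconsS ?vcons0 //; exact: yab.
have [k Sk tyk] := cover _ tyab.
exists k => [|i]; last by have := tyk (lift ord0 i); rewrite vconsS.
by rewrite /= Sk; have := tyk ord0; rewrite vcons0.
Qed.

Lemma measurable_scaled_indic_itv (w a b : R) :
  measurable_fun setT (fun t : R => ((w * \1_(`[a, b[%classic) t)%R)%:E).
Proof. by apply/measurable_EFinP; apply: measurable_funM. Qed.

Lemma integral_scaled_indic_itv (w a b : R) : 0 <= w -> a <= b ->
  (\int[@lebesgue_measure R]_(t in setT) (w * \1_(`[a, b[%classic) t)%:E
   = (w * (b - a))%:E)%E.
Proof.
move=> w0 ab.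
rewrite (@integralZl_indic _ _ _ (@lebesgue_measure R) _ measurableT
  (fun=> `[a, b[%classic)) //; last by rewrite ltNge w0.
rewrite integral_indic // setIT.
have := lebesgue_measure_itv `[a, b[ => /= ->; rewrite lte_fin.
have [ab'|ba] := ltP a b; first by rewrite -EFinD -EFinM.
have -> : b = a by apply/eqP; rewrite eq_le ab ba.
by rewrite subrr mulr0 mule0.
Qed.

Lemma fbox_vol_le_cover0 (a b : 'I_0 -> R) (A B : nat -> 'I_0 -> R)
    (S : pred nat) :
  fbox a b `<=` \bigcup_(k in [set k | S k]) fbox (A k) (B k) ->
  ((fbox_vol a b)%:E <= \sum_(k <oo | S k) (fbox_vol (A k) (B k))%:E)%E.
Proof.
move=> cover.
have [k Sk _] := cover (fun=> 0) (fun i => False_ind _ (notF (ltn_ord i))).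
have vol1 (a' b' : 'I_0 -> R) : fbox_vol a' b' = 1 by rewrite /fbox_vol big_ord0.
rewrite (nneseriesD1 _ Sk) => [|k' _]; last by rewrite /= vol1.
by rewrite /= !vol1 leeDl // nneseries_ge0 // => k' _ _; rewrite vol1.
Qed.

(* The filter [S] lets a slice keep only the boxes meeting it: in dimension 0
   there is no empty box to put in place of the others. *)
Lemma fbox_vol_le_cover d (a b : 'I_d -> R) (A B : nat -> 'I_d -> R)
    (S : pred nat) :
  (forall i, a i <= b i) -> (forall k i, A k i <= B k i) ->
  fbox a b `<=` \bigcup_(k in [set k | S k]) fbox (A k) (B k) ->
  ((fbox_vol a b)%:E <= \sum_(k <oo | S k) (fbox_vol (A k) (B k))%:E)%E.
Proof.
elim: d a b A B S => [|d IH] a b A B S ab AB cover.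
  exact: fbox_vol_le_cover0.
pose V := fbox_vol (vtail a) (vtail b).
have V_ge0 : 0 <= V by apply: fbox_vol_ge0 => i; exact: ab.
pose c k := if S k then fbox_vol (vtail (A k)) (vtail (B k)) else 0.
have c_ge0 k : 0 <= c k.
  by rewrite /c; case: (S k) => //; apply: fbox_vol_ge0 => i; exact: AB.
pose g k t := ((c k * \1_(`[A k ord0, B k ord0[%classic) t)%R)%:E.
have g_ge0 k t : (0 <= g k t)%E by rewrite lee_fin mulr_ge0 // indicE.
have -> : (\sum_(k <oo | S k) (fbox_vol (A k) (B k))%:E =
    \sum_(k <oo) \int[@lebesgue_measure R]_(t in setT) g k t)%E.
  rewrite eseries_mkcond; apply: eq_eseriesr => k _.
  rewrite integral_scaled_indic_itv // /c fbox_volS.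
  by case: (S k); rewrite ?mul0r // mulrC.
rewrite -integral_nneseries // => [|k]; last exact: measurable_scaled_indic_itv.
rewrite fbox_volS mulrC -integral_scaled_indic_itv //.
apply: ge0_le_integral => //.
- by move=> t _; rewrite lee_fin mulr_ge0 // indicE.
- exact: measurable_scaled_indic_itv.
- by apply: (ge0_emeasurable_sum (P := xpredT)) => // k _;
    exact: measurable_scaled_indic_itv.
move=> t _; rewrite indicE.
have [|_] := boolP (t \in `[a ord0, b ord0[%classic); last first.
  by rewrite mulr0 nneseries_ge0.
rewrite inE /= in_itv /= mulr1 => tab.
have slice_sum : (\sum_(k <oo | S k && (A k ord0 <= t < B k ord0)%R)
    (fbox_vol (vtail (A k)) (vtail (B k)))%:E = \sum_(k <oo) g k t)%E.
  rewrite eseries_mkcond; apply: eq_eseriesr => k _; rewrite /g /c indicE.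
  case: (S k) => /=; last by rewrite mul0r.
  have [tk|tk] := boolP (A k ord0 <= t < B k ord0).
    by rewrite mem_set ?mulr1 //= in_itv.
  by rewrite memNset ?mulr0 //= in_itv; apply/negP.
rewrite -slice_sum; apply: IH => [i|k i|]; [exact: ab|exact: AB|].
exact: fbox_slice_cover.
Qed.

End BoxVolume.

Lemma le_lebesgue_outer {R : realType} {d} {S T : set 'rV[R]_d} :
  S `<=` T -> (lebesgue_outer S <= lebesgue_outer T)%E.
Proof.
move=> ST; apply/ereal_infP => _ [A [B [AB cover ->]]].
by apply: ereal_inf_lbound; exists A, B; split => //; exact: subset_trans cover.
Qed.

Lemma lebesgue_outer_box_ge {R : realType} {d} {a b : 'rV[R]_d} :
  (forall i, a ord0 i <= b ord0 i) ->
  ((box_vol a b)%:E <= lebesgue_outer (box a b))%E.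
Proof.
move=> ab; apply/ereal_infP => _ [A [B [AB cover ->]]].
apply: (@fbox_vol_le_cover R d (a ord0) (b ord0) (fun k => A k ord0)
  (fun k => B k ord0) xpredT) => // x xab.
have [|k _ xk] := cover (\row_i x i); first by move=> i; rewrite mxE; exact: xab.
by exists k => // i; have := xk i; rewrite mxE.
Qed.

Lemma connected_meets_boundary (T : topologicalType) (E K : set T) :
  connected K -> K `&` E !=set0 -> K `\` E !=set0 ->
  exists2 y, K y & (closure E `\` interior E) y.
Proof.
move=> Kconn [x [Kx Ex]] [z [Kz nEz]]; apply: contrapT => noboundary.
have sep : separated (interior E) (~` closure E).
  split; apply/seteqP; split => // y [].
    by move=> Ey; apply; apply: closureS Ey; exact: interior_subset.
  move=> /nbhs_interior Ey /(_ _ Ey) [w [nEw Ew]].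
  by apply: nEw; apply: subset_closure; exact: interior_subset.
have KEE : K `<=` interior E `|` ~` closure E.
  move=> y Ky; have [|] := pselect (interior E y); first by left.
  by move=> nEy; right => Ey; apply: noboundary; exists y.
have [KE|KnE] := connected_subset sep KEE Kconn.
  by apply: nEz; apply: interior_subset; exact: KE.
by apply: (KnE _ Kx); exact: subset_closure.
Qed.

Lemma segment_meets_tboundary {R : realType} {d} {E : set 'rV[R]_d}
    {x z : 'rV[R]_d} :
  E x -> ~ E z -> exists2 t : R, 0 <= t <= 1 & tboundary E (x + t *: (z - x)).
Proof.
move=> Ex nEz; pose p t : 'rV[R]_d := x + t *: (z - x).
have p_cont : continuous p.
  by move=> t; apply: cvgD; [exact: cvg_cst | apply: cvgZl; exact: cvg_id].
have [|||_ [t t01 <-]] := @connected_meets_boundary _ E (p @` `[0, 1]) _ _ _.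
- apply: connected_continuous_connected; first exact: segment_connected.
  exact: continuous_subspaceT.
- exists x; split => //; exists 0; first by rewrite /= in_itv /= lexx ler01.
  by rewrite /p scale0r addr0.
- exists z; split => //; exists 1; first by rewrite /= in_itv /= lexx ler01.
  by rewrite /p scale1r addrC subrK.
by exists t => //; move: t01; rewrite /= in_itv.
Qed.

Section EuclideanSpace.
Context {R : realType} {d : nat}.
Implicit Types (x y w : 'rV[R]_d) (A C : set 'rV[R]_d).

Lemma eucl_ge_coord {x y} i : `|x ord0 i - y ord0 i| <= eucl x y.
Proof.
rewrite /eucl -sqrtr_sqr ler_sqrt; last first.
  by rewrite sumr_ge0 // => j _; exact: sqr_ge0.
by rewrite (bigD1 i) //= lerDl sumr_ge0 // => j _; exact: sqr_ge0.
Qed.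

Lemma eucl_le_coord {x y} {r : R} : 0 <= r ->
  (forall i, `|x ord0 i - y ord0 i| <= r) -> eucl x y <= d%:R * r.
Proof.
move=> r0 xy; rewrite /eucl -[d%:R * r]ger0_norm ?mulr_ge0 // -sqrtr_sqr.
rewrite ler_sqrt ?sqr_ge0 //; apply: (@le_trans _ _ (\sum_(j < d) r ^+ 2)).
  by apply: ler_sum => j _; rewrite -real_normK ?num_real // lerXn2r ?nnegrE.
rewrite sumr_const card_ord -[_ *+ d]mulr_natl exprMn ler_wpM2r ?sqr_ge0 //.
by rewrite -natrX ler_nat; case: d => // n; rewrite leq_pmulr.
Qed.

Lemma closure_coord_approx {C y} {e : R} : closure C y -> 0 < e ->
  exists2 w, C w & forall i, `|y ord0 i - w ord0 i| < e.
Proof.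
move=> Cy e0; have [w [Cw [_ yw]]] := Cy _ (nbhsx_ballx y e e0).
by exists w => // i; exact: yw.
Qed.

Lemma edist_lt {x C} {e : R} :
  (Defs.edist x C < e%:E)%E -> exists2 w, C w & eucl x w < e.
Proof. by move=> /ereal_inf_lt [_ [w Cw <-]]; rewrite lte_fin; exists w. Qed.

Lemma hausdorffC A C : hausdorff A C = hausdorff C A.
Proof. by rewrite /hausdorff [maxe (ereal_sup _) _]maxC. Qed.

Lemma hausdorff_ge0 A C : (0 <= hausdorff A C)%E.
Proof. by rewrite /hausdorff le_max lexx. Qed.

Lemma hausdorff_lt {A C} {e : R} : (hausdorff A C < e%:E)%E ->
  forall x, A x -> exists2 w, C w & eucl x w < e.
Proof.
move=> ACe x Ax; apply: edist_lt; apply: le_lt_trans ACe.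
rewrite /hausdorff le_max le_max; apply/orP; right; apply/orP; left.
by apply: ereal_sup_ubound; exists x.
Qed.

Lemma hausdorff_le A C (e : R) : 0 <= e ->
  (forall x, A x -> exists2 w, C w & eucl x w <= e) ->
  (forall x, C x -> exists2 w, A w & eucl x w <= e) ->
  (hausdorff A C <= e%:E)%E.
Proof.
have edist_le F x w : F w -> eucl x w <= e -> (Defs.edist x F <= e%:E)%E.
  move=> Fw xw; apply: le_trans (_ : _ <= (eucl x w)%:E)%E _; last by rewrite lee_fin.
  by apply: ereal_inf_lbound; exists w.
move=> e0 AC CA; rewrite /hausdorff !ge_max lee_fin e0 /=.
apply/andP; split; apply: ge_ereal_sup => _ [x Fx <-].
  by have [w Cw] := AC x Fx; exact: edist_le.
by have [w Aw] := CA x Fx; exact: edist_le.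
Qed.

End EuclideanSpace.

Lemma symdiffC (T : Type) (A B : set T) : symdiff A B = symdiff B A.
Proof. exact: setUC. Qed.

Section Cube.
Context {R : realType} {d : nat}.
Implicit Types (x : 'rV[R]_d) (A C : set 'rV[R]_d).

Definition cube x (r : R) := box (x - const_mx r) (x + const_mx r).

Lemma box_vol_cube x r :
  box_vol (x - const_mx r) (x + const_mx r) = (r + r) ^+ d.
Proof.
rewrite /box_vol (eq_bigr (fun=> r + r)) ?prodr_const ?card_ord // => i _.
by rewrite !mxE; ring.
Qed.

Lemma cube_norm_le {x r y} :
  cube x r y -> forall i, `|x ord0 i - y ord0 i| <= r.
Proof.
by move=> xy i; have := xy i; rewrite !mxE ler_norml => /andP[]; lra.
Qed.

Lemma cube_sub_or_tboundary {A x r} : A x -> 0 <= r ->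
  cube x r `<=` A \/
  exists2 p, tboundary A p & forall i, `|x ord0 i - p ord0 i| <= r.
Proof.
move=> Ax r0.
have [|/nonsubset [z [xz nAz]]] := pselect (cube x r `<=` A); first by left.
right; have [t /andP [t0 t1] bd] := segment_meets_tboundary Ax nAz.
exists (x + t *: (z - x)) => // i.
rewrite !mxE opprD addNKr normrN normrM ger0_norm // -[r]mul1r distrC.
by apply: ler_pM => //; exact: cube_norm_le.
Qed.

Lemma close_of_small_symdiff {A C} {r h e : R} :
  0 < r -> 0 < h -> d%:R * (r + h + h) <= e ->
  (lebesgue_outer (symdiff A C) < ((r + r) ^+ d)%:E)%E ->
  (hausdorff (tboundary A) (tboundary C) < h%:E)%E ->
  forall x, A x -> exists2 w, C w & eucl x w <= e.
Proof.
move=> r0 h0 dr small_diff close_bd x Ax.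
suff [w Cw xw] : exists2 w, C w & forall i, `|x ord0 i - w ord0 i| <= r + h + h.
  by exists w => //; apply: le_trans (eucl_le_coord _ xw) dr; lra.
have [cubeA|[p bdp xp]] := cube_sub_or_tboundary Ax (ltW r0).
  have [[w [xw Cw]]|noC] := pselect (cube x r `&` C !=set0).
    by exists w => // i; apply: le_trans (cube_norm_le xw i) _; lra.
  have cube_diff : cube x r `<=` symdiff A C.
    move=> y xy; left; split; first exact: cubeA.
    by move=> Cy; apply: noC; exists y.
  have cube_vol : (((r + r) ^+ d)%:E <= lebesgue_outer (symdiff A C))%E.
    rewrite -(box_vol_cube x); apply: le_trans (le_lebesgue_outer cube_diff).
    by apply: lebesgue_outer_box_ge => i; rewrite !mxE; lra.
  by have := lt_le_trans small_diff cube_vol; rewrite ltxx.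
have [q [clq _] pq] := hausdorff_lt close_bd _ bdp.
have [w Cw qw] := closure_coord_approx clq h0.
exists w => // i; rewrite -addrA.
apply: le_trans (ler_distD (p ord0 i) _ _) (lerD (xp i) _).
apply: le_trans (ler_distD (q ord0 i) _ _) (lerD _ (ltW (qw i))).
exact: ltW (le_lt_trans (eucl_ge_coord i) pq).
Qed.

End Cube.

Lemma cvge0_le {R : realType} {T : Type} {F : set_system T} {FF : Filter F}
    (f : T -> \bar R) :
  (forall t, (0 <= f t)%E) ->
  (forall e : R, 0 < e -> \forall t \near F, (f t <= e%:E)%E) ->
  f @ F --> 0%E.
Proof.
move=> f_ge0 f_le; apply/fine_cvgP; split.
  apply: filterS (f_le 1 ltr01) => t ft1.
  by rewrite ge0_fin_numE // (le_lt_trans ft1) ?ltry.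
apply/cvgrPdist_le => e e0; apply: filterS (f_le e e0) => t.
rewrite /= sub0r normrN; have := f_ge0 t.
by case: (f t) => //= x; rewrite !lee_fin => /ger0_norm ->.
Qed.

Theorem proposition2p5 (R : realType) (d : nat)
  (E : nat -> set 'rV[R]_d) (E0 : set 'rV[R]_d) :
  (forall n, leb_measurable (E n)) -> leb_measurable E0 ->
  (fun n => lebesgue_outer (symdiff (E n) E0)) @ \oo --> 0%E ->
  (fun n => hausdorff (tboundary (E n)) (tboundary E0)) @ \oo --> 0%E ->
  (fun n => hausdorff (E n) E0) @ \oo --> 0%E.
Proof.
move=> _ _ diff_cvg bd_cvg.
apply: cvge0_le => [n|e e0]; first exact: hausdorff_ge0.
pose r := e / (3 * (d%:R + 1)).
have r0 : 0 < r by rewrite divr_gt0 // mulr_gt0 // ltr_wpDl.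
have dr : d%:R * (r + r + r) <= e.
  have -> : e = (d%:R + 1) * (r + r + r).
    by rewrite /r; field; rewrite lt0r_neq0 // ltr_wpDl.
  by rewrite ler_pM2r ?lerDl // !addr_gt0.
have small_diff : \forall n \near \oo,
    (lebesgue_outer (symdiff (E n) E0) < ((r + r) ^+ d)%:E)%E.
  apply: (diff_cvg _ (open_ereal_lt' _)).
  by rewrite lte_fin exprn_gt0 // addr_gt0.
have close_bd : \forall n \near \oo,
    (hausdorff (tboundary (E n)) (tboundary E0) < r%:E)%E.
  by apply: (bd_cvg _ (open_ereal_lt' _)); rewrite lte_fin.
apply: filterS2 small_diff close_bd => n diff_n bd_n.
apply: hausdorff_le (ltW e0) _ _.
  exact: (close_of_small_symdiff r0 r0 dr diff_n bd_n).
rewrite symdiffC in diff_n; rewrite hausdorffC in bd_n.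
exact: (close_of_small_symdiff r0 r0 dr diff_n bd_n).
Qed.
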